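(* As closed quantum subgroups of $U_N^+$, $\mathbb TO_N^+\cap U_N^\times=\mathbb TO_N^*$. Equivalently: if the standard coordinates $u_{ij}$ of a closed quantum subgroup $G\subset U_N^+$ satisfy $ab^*=a^*b$ and $ab^*c=cb^*a$ for all $a,b,c\in\{u_{ij}\}$, then they satisfy $abc=cba$ for all $a,b,c\in\{u_{ij},u_{ij}^*\}$.
   Context: $C(U_N^+)$ is the universal unital C*-algebra generated by $u_{ij}$ such that $u=(u_{ij})$ and $\bar u=(u_{ij}^* )$ are unitary, a compact quantum group with $\Delta(u_{ij})=\sum_ku_{ik}\otimes u_{kj}$; closed quantum subgroups correspond to Hopf quotients, and an intersection $G\cap H$ corresponds to imposing both sets of relations. $\mathbb TO_N^+$: impose $ab^*=a^*b$ for $a,b\in\{u_{ij}\}$; $U_N^\times$: impose $ab^*c=cb^*a$ for $a,b,c\in\{u_{ij}\}$; $U_N^{**}$: impose $abc=cba$ for $a,b,c\in\{u_{ij},u_{ij}^*\}$; $\mathbb TO_N^*=\mathbb TO_N^+\cap U_N^{**}$. *)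

From HB Require Import structures.
From mathcomp Require Import all_boot all_order all_algebra all_field.
Set Implicit Arguments. Unset Strict Implicit. Unset Printing Implicit Defensive.
Import Order.TTheory GRing.Theory Num.Theory.
Local Open Scope ring_scope.

Definition is_star (A : algType algC) (st : A -> A) : Prop :=
  [/\ forall x y : A, st (x + y) = st x + st y,
      forall (c : algC) (x : A), st (c *: x) = (c^*)%C *: st x,
      forall x y : A, st (x * y) = st y * st x
    & forall x : A, st (st x) = x].

Definition adjmx (A : algType algC) (st : A -> A) (N : nat) (M : 'M[A]_N) :
  'M[A]_N := (map_mx st M)^T.

Definition unitary_mx (A : algType algC) (st : A -> A) (N : nat) (M : 'M[A]_N) :
  Prop := M *m adjmx st M = 1%:M /\ adjmx st M *m M = 1%:M.

(* u = (u_ij) and ubar = (u_ij^* ) are unitary: the defining relations of C(U_N^+) *)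
Definition UNplus_rel (A : algType algC) (st : A -> A) (N : nat) (u : 'M[A]_N) :
  Prop := unitary_mx st u /\ unitary_mx st (map_mx st u).

Definition TOplus_rel (A : algType algC) (st : A -> A) (N : nat) (u : 'M[A]_N) :
  Prop := forall i j k l, u i j * st (u k l) = st (u i j) * u k l.

Definition Utimes_rel (A : algType algC) (st : A -> A) (N : nat) (u : 'M[A]_N) :
  Prop := forall i j k l m n,
    u i j * st (u k l) * u m n = u m n * st (u k l) * u i j.

Definition coord_or_star (A : algType algC) (st : A -> A) (N : nat) (u : 'M[A]_N)
  (x : A) : Prop := exists i j, x = u i j \/ x = st (u i j).

Definition Ustarstar_rel (A : algType algC) (st : A -> A) (N : nat) (u : 'M[A]_N) :
  Prop := forall a b c, coord_or_star st u a -> coord_or_star st u b ->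
    coord_or_star st u c -> a * b * c = c * b * a.

(* Let S be the set of coordinates u_ij, so that a b* = a* b and
   a b* c = c b* a on S. Moving stars with these gives a b c x* = c b a x*
   for a, b, c, x in S, and summing against the column relation
   sum_k u_ki* u_ki = 1 yields a b c = c b a. A product with one star reduces
   to a b* c = c b* a by moving that star to the middle; products with two or
   three stars are adjoints of products with at most one. *)
From HB Require Import structures.
From mathcomp Require Import all_boot all_order all_algebra all_field.
Import GRing.Theory.
Local Open Scope ring_scope.

Set Implicit Arguments.

Definition starif (R : Type) (st : R -> R) (e : bool) (x : R) : R :=
  if e then st x else x.

Section ReverseProducts.

Variables (R : pzRingType) (st : R -> R) (S : R -> Prop).
Hypothesis st_mul : forall x y, st (x * y) = st y * st x.
Hypothesis stK : involutive st.
Hypothesis mul_star_swap : forall p q, S p -> S q -> p * st q = st p * q.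
Hypothesis reverse3_mid_star :
  forall a b c, S a -> S b -> S c -> a * st b * c = c * st b * a.

Lemma reverse3_st x y z :
  x * y * z = z * y * x -> st x * st y * st z = st z * st y * st x.
Proof. by move=> xyz; rewrite -!st_mul mulrA -xyz mulrA. Qed.

Lemma reverse3_star_l a b c :
  S a -> S b -> S c -> st a * b * c = c * b * st a.
Proof.
move=> Sa Sb Sc.
by rewrite -(mul_star_swap Sa Sb) reverse3_mid_star // -mulrA -mul_star_swap ?mulrA.
Qed.

Lemma reverse3_mulr_star a b c x :
  S a -> S b -> S c -> S x -> a * b * c * st x = c * b * a * st x.
Proof.
move=> Sa Sb Sc Sx.
rewrite -(mulrA _ c) (mul_star_swap Sc Sx) -(mulrA a) (mulrA b).
rewrite (reverse3_mid_star Sb Sc Sx) (mul_star_swap Sx Sc) !mulrA.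
rewrite (reverse3_mid_star Sa Sx Sc) -!(mulrA c) -(mul_star_swap Sx Sa).
by rewrite (reverse3_mid_star Sx Sa Sb) -(mulrA b) -(mul_star_swap Sa Sx) !mulrA.
Qed.

Lemma reverse3 (n : nat) (x : 'I_n -> R) :
  (forall k, S (x k)) -> \sum_k st (x k) * x k = 1 ->
  forall a b c, S a -> S b -> S c -> a * b * c = c * b * a.
Proof.
move=> Sx sum1 a b c Sa Sb Sc.
rewrite -[a * b * c]mulr1 -[c * b * a]mulr1 -sum1 !mulr_sumr.
by apply: eq_bigr => k _; rewrite !mulrA reverse3_mulr_star.
Qed.

Lemma reverse3_starif (n : nat) (x : 'I_n -> R) :
  (forall k, S (x k)) -> \sum_k st (x k) * x k = 1 ->
  forall (ea eb ec : bool) a b c, S a -> S b -> S c ->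
  starif st ea a * starif st eb b * starif st ec c =
  starif st ec c * starif st eb b * starif st ea a.
Proof.
move=> Sx sum1 ea eb ec a b c Sa Sb Sc.
have rev := @reverse3 n x Sx sum1.
case: ea; case: eb; case: ec => /=.
- exact/reverse3_st/rev.
- by rewrite -[c]stK; apply/reverse3_st/esym/reverse3_star_l.
- by rewrite -[b]stK; apply/reverse3_st/reverse3_mid_star.
- exact: reverse3_star_l.
- by rewrite -[a]stK; apply/reverse3_st/reverse3_star_l.
- exact: reverse3_mid_star.
- exact/esym/reverse3_star_l.
- exact: rev.
Qed.

End ReverseProducts.

Lemma adjmx_mul_diag (A : algType algC) (st : A -> A) (N : nat) (u : 'M[A]_N) :
  adjmx st u *m u = 1%:M -> forall i, \sum_k st (u k i) * u k i = 1.
Proof.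
move=> uu1 i; have := congr1 (fun M : 'M[A]_N => M i i) uu1.
rewrite !mxE eqxx mulr1n => <-.
by apply: eq_bigr => k _; rewrite !mxE.
Qed.

Theorem proposition3p6 (A : algType algC) (st : A -> A) (N : nat) (u : 'M[A]_N) :
  is_star st -> UNplus_rel st u ->
  TOplus_rel st u -> Utimes_rel st u ->
  Ustarstar_rel st u.
Proof.
move=> [_ _ st_mul stK] [[_ uu1] _] TO Ux.
pose S x := exists i j, x = u i j.
have Su i j : S (u i j) by exists i, j.
have swap p q : S p -> S q -> p * st q = st p * q.
  by move=> [i [j ->]] [k [l ->]]; apply: TO.
have mid x y z : S x -> S y -> S z -> x * st y * z = z * st y * x.
  by move=> [i [j ->]] [k [l ->]] [m [n ->]]; apply: Ux.
have starifP x : coord_or_star st u x -> exists e y, S y /\ x = starif st e y.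
  by move=> [i [j [->|->]]]; [exists false | exists true]; exists (u i j).
move=> _ _ _ /starifP [ea [a [Sa ->]]] /starifP [eb [b [Sb ->]]] /starifP [ec [c [Sc ->]]].
case: (Sa) => i _.
exact: (@reverse3_starif _ st S st_mul stK swap mid N _ (Su^~ i) (adjmx_mul_diag uu1 i)).
Qed.
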